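(* Let $N\ge 1$ and $M$ be integers and let $\mathcal{G}_{N,M}=\{G_1,\dots,G_{S_{N,M}}\}$ be the set of simple undirected networks (no self-edges, no repeated edges) on the fixed node set $\{1,\dots,N\}$ with exactly $M$ edges, so $S_{N,M}=\binom{N(N-1)/2}{M}$. Consider the Markov chain on $\mathcal{G}_{N,M}$ given by uniform rewiring, with transition matrix $P_{rs}$ equal to the probability that one uniform rewire turns $G_r$ into $G_s$, and let $\pi^{(t)}$ evolve by $\pi^{(t+1)}_s=\sum_r \pi^{(t)}_r P_{rs}$ from an initial distribution $\pi^{(0)}$ concentrated on an initial network $G^{(0)}\in\mathcal{G}_{N,M}$. Then this Markov chain is ergodic and has the uniform stationary distribution: $\lim_{t\to\infty}\pi^{(t)}_s=S_{N,M}^{-1}$ for every $s$.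
   Context: Uniform rewiring is the stochastic map on $\mathcal{G}_{N,M}$ taking a network with edge set $\mathcal{E}$ to the network with edge set $(\mathcal{E}\setminus\{(i,j)\})\cup\{(i',j')\}$, where $(i,j)$ is chosen uniformly at random from $\mathcal{E}$, and then $(i',j')$ is chosen uniformly at random among the $N(N-1)/2-M+1$ node pairs $\{i',j'\}$, $i'\neq j'$, that are not edges of $\mathcal{E}\setminus\{(i,j)\}$ (so re-selecting $(i,j)$ is allowed). *)

From HB Require Import structures.
From mathcomp Require Import all_boot all_order all_algebra.
From mathcomp Require Import all_classical all_reals all_analysis.
Set Implicit Arguments. Unset Strict Implicit. Unset Printing Implicit Defensive.
Import Order.TTheory GRing.Theory Num.Theory.
Local Open Scope ring_scope.

Definition pairT (N : nat) := {s : {set 'I_N} | #|s| == 2%N}.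

Definition net (N M : nat) := {E : {set pairT N} | #|E| == M}.

(* Transition probability of uniform rewiring, following the definition:
   choose (i,j) uniformly in E, then choose (i',j') uniformly among the
   node pairs that are not edges of E \ {(i,j)}. *)
Definition rewireP (R : realType) (N M : nat) (G H : net N M) : R :=
  \sum_(e in val G)
    \sum_(e' in ~: (val G :\ e))
      (if val H == (val G :\ e) :|: [set e'] then
         (#|val G|%:R)^-1 * (#|~: (val G :\ e)|%:R)^-1 else 0).

Fixpoint rewire_dist (R : realType) (N M : nat) (G0 : net N M) (t : nat)
  : net N M -> R :=
  match t with
  | 0%N => fun s => (s == G0)%:R
  | t'.+1 => fun s => \sum_r rewire_dist R G0 t' r * rewireP R r s
  end.

Definition stepP (R : realType) (N M : nat) (t : nat) (r s : net N M) : R :=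
  rewire_dist R r t s.

Definition irreducible_chain (R : realType) (N M : nat) : Prop :=
  forall r s : net N M, exists t : nat, 0 < stepP R t r s.

Definition aperiodic_chain (R : realType) (N M : nat) : Prop :=
  forall r : net N M, forall d : nat,
    (forall t : nat, (0 < t)%N -> 0 < stepP R t r r -> (d %| t)%N) -> d = 1%N.

Definition ergodic_chain (R : realType) (N M : nat) : Prop :=
  irreducible_chain R N M /\ aperiodic_chain R N M.

From HB Require Import structures.
From mathcomp Require Import all_boot all_order all_algebra.
From mathcomp Require Import all_classical all_reals all_analysis.
From mathcomp Require Import zify.
Import Order.TTheory GRing.Theory Num.Theory.
Import numFieldNormedType.Exports.
Set Implicit Arguments. Unset Strict Implicit. Unset Printing Implicit Defensive.
Local Open Scope classical_set_scope.
Local Open Scope ring_scope.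

(* Undoing a rewire is a rewire: replacing e by e' in G gives H exactly when
   replacing e' by e in H gives G, and the normalisation M (K - M + 1) of a
   rewire, K = N(N-1)/2, does not depend on the network.  So the transition
   matrix is symmetric, hence doubly stochastic, and the uniform distribution
   is stationary.  The chain is lazy (re-selecting the removed pair is allowed)
   and any network can be turned into any other by swapping in its missing
   edges one at a time, so every entry of P^M is at least some d > 0.  A doubly
   stochastic matrix with entries >= d contracts the l1 distance to the uniform
   distribution by the factor 1 - S_{N,M} d, which gives the convergence. *)

Lemma contraction_cvg0 (R : realType) (E : nat -> R) (K : nat) (rho B : R) :
  0 <= rho -> rho < 1 -> (forall t, 0 <= E t) -> (forall t, E t <= B) ->
  (forall t, E (t + K)%N <= rho * E t) -> E @ \oo --> 0.
Proof.
move=> rho_ge0 rho_lt1 E_ge0 E_leB E_contr.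
have E_geom k j : E (j + k * K)%N <= rho ^+ k * B.
  elim: k j => [|k IH] j; first by rewrite addn0 expr0 mul1r.
  rewrite mulSn addnCA addnC exprS -mulrA.
  by apply: le_trans (E_contr _) _; rewrite ler_wpM2l.
have geom0 : (rho ^+ k * B) @[k --> \oo] --> 0.
  by rewrite -(mul0r B); apply: cvgM; [apply: cvg_expr; rewrite ger0_norm|apply: cvg_cst].
apply/cvgrPdist_le => eps eps_gt0.
have [k _ hk] := (cvgrPdist_le _ _).1 geom0 eps eps_gt0.
near=> t.
have kKt : (k * K <= t)%N by near: t; apply: nbhs_infty_ge.
rewrite sub0r normrN ger0_norm // -(subnK kKt).
apply: le_trans (E_geom _ _) _.
by have := hk k (leqnn k); rewrite sub0r normrN /=; apply: le_trans; apply: ler_norm.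
Unshelve. all: by end_near.
Qed.

Definition dist_unif (R : realType) (T : finType) (nu : T -> R) : R :=
  \sum_x `|nu x - #|T|%:R^-1|.

Lemma sumrB_unif (R : realType) (T : finType) (nu : T -> R) :
  \sum_x nu x = 1 -> \sum_x (nu x - #|T|%:R^-1) = 0.
Proof.
move=> nu1; have T_gt0 : (0 < #|T|)%N.
  rewrite lt0n; apply: contra_eq_neq nu1 => /card0_eq T0.
  by rewrite big_pred0 ?(@eq_sym _ 0) ?oner_eq0.
rewrite sumrB nu1 sumr_const -[X in 1 - X]mulr_natr mulVf ?subrr //.
by rewrite pnatr_eq0 -lt0n.
Qed.

Lemma dist_unif_le2 (R : realType) (T : finType) (nu : T -> R) :
  (forall x, 0 <= nu x) -> \sum_x nu x = 1 -> dist_unif nu <= 2.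
Proof.
move=> nu_ge0 nu1; have := sumrB_unif nu1; rewrite sumrB nu1 => /eqP.
rewrite subr_eq0 eq_sym => /eqP unif1.
apply: le_trans (_ : _ <= \sum_x (nu x + #|T|%:R^-1)) _.
  apply: ler_sum => x _; apply: le_trans (ler_normB _ _) _.
  by rewrite !ger0_norm ?invr_ge0.
by rewrite big_split /= nu1 unif1.
Qed.

Section MarkovChain.
Variables (R : realType) (T : finType) (P : T -> T -> R).
Hypothesis P_ge0 : forall r s, 0 <= P r s.
Hypothesis P_row1 : forall r, \sum_s P r s = 1.
Hypothesis P_col1 : forall s, \sum_r P r s = 1.

Fixpoint mc_dist (mu : T -> R) (t : nat) : T -> R :=
  if t is t'.+1 then fun s => \sum_r mc_dist mu t' r * P r s else mu.

Definition mc_step (t : nat) (r : T) : T -> R := mc_dist (fun s => (s == r)%:R) t.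

Lemma mc_dist_ge0 mu t s : (forall x, 0 <= mu x) -> 0 <= mc_dist mu t s.
Proof.
move=> mu_ge0; elim: t s => [|t IH] s //=.
by apply: sumr_ge0 => r _; rewrite mulr_ge0.
Qed.

Lemma mc_dist_sum mu t : \sum_s mc_dist mu t s = \sum_s mu s.
Proof.
elim: t => [|t IH] //=; rewrite exchange_big -IH /=; apply: eq_bigr => r _.
by rewrite -mulr_sumr P_row1 mulr1.
Qed.

Lemma mc_distD mu t u : mc_dist mu (t + u) = mc_dist (mc_dist mu t) u.
Proof. by elim: u => [|u IH]; rewrite ?addn0 // addnS /= IH. Qed.

Lemma mc_distE mu t s : mc_dist mu t s = \sum_r mu r * mc_step t r s.
Proof.
elim: t s => [|t IH] s; rewrite /mc_step /=.
  rewrite (bigD1 s) //= eqxx mulr1 big1 ?addr0 // => r /negPf.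
  by rewrite eq_sym => ->; rewrite mulr0.
under eq_bigr do rewrite IH mulr_suml.
rewrite exchange_big; apply: eq_bigr => r _ /=; rewrite mulr_sumr.
by apply: eq_bigr => u _; rewrite mulrA.
Qed.

Lemma mc_step_row1 t r : \sum_s mc_step t r s = 1.
Proof.
rewrite mc_dist_sum (bigD1 r) //= eqxx big1 ?addr0 // => s.
by move/negPf->.
Qed.

Lemma mc_step_col1 t s : \sum_r mc_step t r s = 1.
Proof.
elim: t s => [|t IH] s; rewrite /mc_step /=.
  by rewrite (bigD1 s) //= eqxx big1 ?addr0 // => r; rewrite eq_sym => /negPf->.
rewrite exchange_big /= -[RHS](P_col1 s); apply: eq_bigr => u _.
by rewrite -mulr_suml IH mul1r.
Qed.

Lemma mc_step_gt0S t r u s :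
  0 < mc_step t r u -> 0 < P u s -> 0 < mc_step t.+1 r s.
Proof.
move=> ru_gt0 us_gt0; rewrite /mc_step /= (bigD1 u) //= ltr_pwDl ?mulr_gt0 //.
by apply: sumr_ge0 => v _; rewrite mulr_ge0 ?mc_dist_ge0 // => x; rewrite ler0n.
Qed.

Lemma dist_unif_mc_step_le K d nu :
  (forall r s, d <= mc_step K r s) -> \sum_x nu x = 1 ->
  dist_unif (mc_dist nu K) <= (1 - #|T|%:R * d) * dist_unif nu.
Proof.
move=> d_le nu1; set c := (#|T|%:R^-1 : R).
(* Columns of the K-step matrix sum to 1 and nu - c sums to 0, so the floor d
   can be subtracted from every entry for free. *)
have centered s : mc_dist nu K s - c = \sum_r (nu r - c) * (mc_step K r s - d).
  rewrite mc_distE.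
  under [RHS]eq_bigr do rewrite mulrBr mulrBl.
  rewrite !sumrB -mulr_sumr mc_step_col1 mulr1 -mulr_suml sumrB_unif // mul0r.
  by rewrite subr0.
rewrite /dist_unif; under eq_bigr do rewrite centered.
apply: le_trans (_ : _ <= \sum_s \sum_r `|nu r - c| * (mc_step K r s - d)) _.
  apply: ler_sum => s _; apply: le_trans (ler_norm_sum _ _ _) _.
  by apply: ler_sum => r _; rewrite normrM ler_wpM2l // ger0_norm ?subr_ge0.
rewrite exchange_big mulr_sumr; apply: ler_sum => r _ /=.
by rewrite -mulr_sumr sumrB mc_step_row1 sumr_const mulr_natl mulrC.
Qed.

Lemma mc_dist_cvg_unif K mu s :
  (forall r x, 0 < mc_step K r x) -> (forall x, 0 <= mu x) -> \sum_x mu x = 1 ->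
  mc_dist mu t s @[t --> \oo] --> (#|T|%:R^-1 : R).
Proof.
move=> step_gt0 mu_ge0 mu1.
have [[r0 x0] _ /= d_min] :=
  @arg_minP _ _ (T * T)%type (s, s) xpredT (fun p => mc_step K p.1 p.2) isT.
set d := mc_step K r0 x0; have d_gt0 : 0 < d := step_gt0 r0 x0.
have d_le r x : d <= mc_step K r x := d_min (r, x) isT.
have T_gt0 : (0 < #|T|)%N by apply/card_gt0P; exists s.
have rho_ge0 : 0 <= 1 - #|T|%:R * d.
  rewrite subr_ge0 mulr_natl -sumr_const -[leRHS](mc_step_row1 K s).
  exact: ler_sum.
have rho_lt1 : 1 - #|T|%:R * d < 1 by rewrite gtrDl oppr_lt0 mulr_gt0 ?ltr0n.
have dist0 : (fun t => dist_unif (mc_dist mu t)) @ \oo --> 0.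
  apply: (@contraction_cvg0 _ _ K _ 2 rho_ge0 rho_lt1) => t.
  - by apply: sumr_ge0.
  - by apply: dist_unif_le2; [move=> x; apply: mc_dist_ge0|rewrite mc_dist_sum].
  - by rewrite mc_distD; apply: dist_unif_mc_step_le; rewrite ?mc_dist_sum.
apply/cvgrPdist_le => eps eps_gt0.
apply: filterS ((cvgrPdist_le _ _).1 dist0 eps eps_gt0) => t /=.
rewrite sub0r normrN ger0_norm; last exact: sumr_ge0.
apply: le_trans; rewrite distrC /dist_unif (bigD1 s) //= lerDl.
exact: sumr_ge0.
Qed.

End MarkovChain.

Section Rewire.
Variable T : finType.
Implicit Types (E F : {set T}) (e : T).

Definition rewire_step E F e e' : bool :=
  [&& e \in E, e' \notin E :\ e & F == E :\ e :|: [set e']].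

Lemma rewire_stepC E F e e' : rewire_step E F e e' = rewire_step F E e' e.
Proof.
suff imp E' F' f f' : rewire_step E' F' f f' -> rewire_step F' E' f' f.
  by apply/idP/idP; apply: imp.
case/and3P=> f_in f'_notin /eqP->; rewrite !inE negb_and negbK in f'_notin.
apply/and3P; split; first by rewrite !inE eqxx orbT.
  by rewrite !inE eqxx /=; case: eqP.
apply/eqP/setP => x; rewrite !inE.
have [->|x_neq_f] := eqVneq x f; first by rewrite f_in orbT.
have [x_eq_f'|_] := eqVneq x f'; last by rewrite /= !orbF.
subst x; rewrite (negPf x_neq_f) /= in f'_notin.
by rewrite /= (negPf f'_notin).
Qed.

Lemma card_rewire E e e' :
  e \in E -> e' \notin E :\ e -> #|E :\ e :|: [set e']| = #|E|.
Proof.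
by move=> e_in e'_notin; rewrite finset.setUC cardsU1 e'_notin (cardsD1 e E) e_in.
Qed.

Lemma card_rewire_targets E e : e \in E -> #|~: (E :\ e)| = (#|T| - #|E|.-1)%N.
Proof. by move=> e_in; rewrite cardsCs finset.setCK (cardsD1 e E) e_in. Qed.

Lemma rewire_toward E F e : #|E| = #|F| -> e \in F :\: E ->
  exists2 e', e' \notin F :\ e & (F :\ e :|: [set e']) :\: E = (F :\: E) :\ e.
Proof.
move=> EF e_in; have : (0 < #|E :\: F|)%N.
  by rewrite cardsD EF finset.setIC -cardsD; apply/card_gt0P; exists e.
case/card_gt0P => e'; rewrite inE => /andP[e'_notinF e'_inE].
exists e'; first by rewrite inE (negPf e'_notinF) andbF.
apply/setP => x; rewrite !inE.
have [->|x_neq_e'] := eqVneq x e'; first by rewrite e'_inE !andbF.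
by rewrite orbF andbCA.
Qed.

End Rewire.

Section UniformRewiring.
Variables (R : realType) (N M : nat).
Implicit Types G H : net N M.

Lemma card_net G : #|val G| = M.
Proof. exact: eqP (valP G). Qed.

Lemma sum_net_val_eq (X : {set pairT N}) :
  #|X| = M -> (\sum_(H : net N M) (val H == X))%N = 1%N.
Proof.
move=> /eqP XM; rewrite (bigD1 (exist _ X XM)) //= eqxx big1 // => H.
by move=> /eqP H_neq; case: eqP => // H_eq; case: H_neq; apply: val_inj.
Qed.

Definition n_targets : nat := #|{: pairT N}| - M.-1.

Definition rewire_ways G H : nat :=
  (\sum_e \sum_e' rewire_step (val G) (val H) e e')%N.

Lemma rewire_waysC G H : rewire_ways G H = rewire_ways H G.
Proof.
rewrite /rewire_ways exchange_big; apply: eq_bigr => e' _.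
by apply: eq_bigr => e _; rewrite rewire_stepC.
Qed.

Lemma rewire_ways_row G : (\sum_H rewire_ways G H)%N = (M * n_targets)%N.
Proof.
have -> : (M * n_targets = \sum_(e in val G) n_targets)%N.
  by rewrite sum_nat_const card_net.
rewrite [RHS]big_mkcond exchange_big /=.
apply: eq_bigr => e _; rewrite exchange_big /=.
case: (boolP (e \in val G)) => e_in; last first.
  by rewrite big1 // => e' _; rewrite big1 // => H _; rewrite /rewire_step (negPf e_in).
have -> : n_targets = #|~: (val G :\ e)| by rewrite card_rewire_targets ?card_net.
rewrite -sum1_card [RHS]big_mkcond /=.
apply: eq_bigr => e' _; rewrite inE /rewire_step e_in /=.
case: ifP => e'_notin; last by rewrite big1 // => H _; rewrite e'_notin.
by rewrite /= sum_net_val_eq // card_rewire ?card_net.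
Qed.

Hypothesis M_gt0 : (0 < M)%N.

Lemma n_targets_gt0 G : (0 < n_targets)%N.
Proof.
by have := max_card (mem (val G)); rewrite card_net /n_targets subn_gt0 prednK.
Qed.

Lemma rewirePE G H :
  rewireP R G H = (rewire_ways G H)%:R / (M * n_targets)%:R.
Proof.
rewrite /rewireP /rewire_ways natr_sum mulr_suml big_mkcond /=.
apply: eq_bigr => e _; case: (boolP (e \in val G)) => e_in; last first.
  by rewrite big1 ?mul0r // => e' _; rewrite /rewire_step (negPf e_in).
rewrite card_net card_rewire_targets // card_net natr_sum mulr_suml big_mkcond /=.
apply: eq_bigr => e' _; rewrite inE /rewire_step e_in /=.
case: (e' \notin _); last by rewrite mul0r.
by case: (_ == _); rewrite ?mul0r // mul1r natrM invfM.
Qed.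

Lemma rewireP_ge0 G H : 0 <= rewireP R G H.
Proof. by rewrite rewirePE divr_ge0. Qed.

Lemma rewireP_row1 G : \sum_H rewireP R G H = 1.
Proof.
under eq_bigr do rewrite rewirePE.
rewrite -mulr_suml -natr_sum rewire_ways_row divff // pnatr_eq0 -lt0n.
by rewrite muln_gt0 M_gt0 (n_targets_gt0 G).
Qed.

Lemma rewireP_col1 H : \sum_G rewireP R G H = 1.
Proof.
under eq_bigr do rewrite rewirePE rewire_waysC.
rewrite -mulr_suml -natr_sum rewire_ways_row divff // pnatr_eq0 -lt0n.
by rewrite muln_gt0 M_gt0 (n_targets_gt0 H).
Qed.

Lemma rewireP_gt0 G H e e' :
  rewire_step (val G) (val H) e e' -> 0 < rewireP R G H.
Proof.
move=> GH; rewrite rewirePE divr_gt0 ?ltr0n ?muln_gt0 ?M_gt0 ?(n_targets_gt0 G) //.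
rewrite /rewire_ways (bigD1 e) //= (bigD1 e') //= GH.
by rewrite -addnA add1n.
Qed.

Lemma rewireP_refl_gt0 G : 0 < rewireP R G G.
Proof.
have [e e_in] : exists e, e \in val G by apply/card_gt0P; rewrite card_net.
apply: (@rewireP_gt0 _ _ e e); rewrite /rewire_step e_in !inE eqxx /=.
apply/eqP/setP => x; rewrite !inE.
by have [->|] := eqVneq x e; rewrite ?e_in ?orbT ?orbF.
Qed.

Lemma rewire_reach t (r s : net N M) :
  (#|val s :\: val r| <= t)%N -> 0 < mc_step (@rewireP R N M) t r s.
Proof.
elim: t s => [|t IH] s dist_le.
  have -> : s = r.
    apply/val_inj/eqP; rewrite eqEcard !card_net leqnn andbT -finset.setD_eq0.
    by rewrite -cards_eq0 -leqn0.
  by rewrite /mc_step /= eqxx ltr01.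
have [dist_le_t|dist_gt_t] := leqP #|val s :\: val r| t.
  apply: (mc_step_gt0S (@rewireP_ge0) (IH s dist_le_t)).
  exact: rewireP_refl_gt0.
have [e e_in] : exists e, e \in val s :\: val r by apply/card_gt0P; lia.
have [e' e'_notin dist_u] :=
  rewire_toward (etrans (card_net r) (esym (card_net s))) e_in.
have e_in_s : e \in val s by move: e_in; rewrite inE => /andP[].
have uM : #|val s :\ e :|: [set e']| == M by rewrite card_rewire ?card_net.
pose u : net N M := exist (fun E : {set pairT N} => #|E| == M) _ uM.
apply: (mc_step_gt0S (@rewireP_ge0) (u := u)).
  apply: IH; rewrite /= dist_u.
  by have := cardsD1 e (val s :\: val r); rewrite e_in add1n -ltnS => <-.
apply: (@rewireP_gt0 _ _ e' e).
by rewrite rewire_stepC /rewire_step e_in_s e'_notin eqxx.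
Qed.

End UniformRewiring.

Lemma rewire_distE (R : realType) (N M : nat) (G0 : net N M) t s :
  rewire_dist R G0 t s = mc_dist (@rewireP R N M) (fun x => (x == G0)%:R) t s.
Proof. by elim: t s => [|t IH] s //=; apply: eq_bigr => r _; rewrite IH. Qed.

Lemma card_nets (N M : nat) : #|{: net N M}| = 'C(N * (N - 1) %/ 2, M).
Proof.
have card_pairs : #|{: pairT N}| = 'C(N, 2).
  rewrite card_sig -[in RHS](card_ord N) -card_draws.
  by apply: eq_card => x; rewrite !inE.
have -> : (N * (N - 1) %/ 2)%N = #|{: pairT N}| by rewrite card_pairs bin2 -divn2 subn1.
by rewrite card_sig -card_draws; apply: eq_card => x; rewrite !inE.
Qed.

Theorem theorem3p2 (R : realType) (N M : nat) (hN : (1 <= N)%N) (hM : (0 < M)%N)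
  (G0 : net N M) :
  ergodic_chain R N M /\
  (forall s : net N M,
     \sum_r ('C(N * (N - 1) %/ 2, M)%:R)^-1 * rewireP R r s
       = ('C(N * (N - 1) %/ 2, M)%:R)^-1 :> R) /\
  (forall s : net N M,
     (fun t : nat => rewire_dist R G0 t s) @ \oo
       --> (('C(N * (N - 1) %/ 2, M)%:R)^-1 : R)).
Proof.
have stepPE t (r s : net N M) : stepP R t r s = mc_step (@rewireP R N M) t r s.
  exact: rewire_distE.
have reach_in_M (r s : net N M) : 0 < stepP R M r s.
  rewrite stepPE rewire_reach // (leq_trans (subset_leq_card (subsetDl _ _))) //.
  by rewrite card_net.
split; [split|split].
- by move=> r s; exists M; apply: reach_in_M.
- move=> r d d_dvd; apply/eqP; rewrite -dvdn1; apply: d_dvd => //.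
  by rewrite stepPE rewire_reach // finset.setDv cards0.
- by move=> s; rewrite -mulr_sumr rewireP_col1 // mulr1.
- move=> s; rewrite -card_nets.
  under eq_fun do rewrite rewire_distE.
  have := @mc_dist_cvg_unif _ _ _ (@rewireP_ge0 R N M)
    (rewireP_row1 R hM) (rewireP_col1 R hM) M.
  apply=> [r x|x|].
  + by rewrite -stepPE; apply: reach_in_M.
  + by rewrite ler0n.
  + by rewrite (bigD1 G0) //= eqxx big1 ?addr0 // => x /negPf->.
Qed.
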